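(* Let $S$ be a simple $(l,r)$-framed algebra, $D_S=\{d:\bigoplus_cS_{(d,c)}\ne0\}$, and for $d\in\mathbb{Z}_2^{l+r}$ let $A_S(d)=\bigoplus_{c}S_{(d,c)}$. Let $d\in D_S$ and let $N\subset A_S(d)$ be an $\mathrm{IS}^{(l,r)}$-graded subspace with $a\cdot n\in N$ for all $a\in A_S(0)$, $n\in N$. Then $N=0$ or $N=A_S(d)$.
   Context: Let $\mathrm{IS}=\{0,\frac12,\frac1{16}\}$ with fusion rule $\star$ (values are subsets): $0\star h=h\star0=\{h\}$, $\frac12\star\frac12=\{0\}$, $\frac12\star\frac1{16}=\frac1{16}\star\frac12=\{\frac1{16}\}$, $\frac1{16}\star\frac1{16}=\{0,\frac12\}$; $A(h_0,h_1,h_2,h_3)=\{h: h\in h_2\star h_3,\ h_0\in h_1\star h\}$. For $h\in A(h_0,h_1,h_2,h_3)$, $h'\in A(h_0,h_2,h_1,h_3)$ define $B^{h,h'}_{h_0,h_1,h_2,h_3}$: $B_{*,0,*,*}=B_{*,*,0,*}=1$; $B_{*,\frac12,\frac12,*}=-1$; $B_{a,\frac12,\frac1{16},a'}=B_{a,\frac1{16},\frac12,a'}=i$ if $a$ or $a'$ is $\frac12$, else $-i$; $B^{b,b'}_{a,\frac1{16},\frac1{16},a'}=e^{-\pi i/8}\cdot\{1$ if $a,a'\ne\frac1{16},a=a'$; $i$ if $a,a'\neq\frac1{16},a\ne a'$; $\frac{1+i}2$ if $a=a'=\frac1{16},b=b'$; $\frac{1-i}2$ if $a=a'=\frac1{16},b\neq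 b'\}$. $\mathrm{IS}^{(l,r)}=\mathrm{IS}^l\times\mathrm{IS}^r$, $\lambda=(h_1,..,h_l,\bar h_1,..,\bar h_r)$, $s(\lambda)=\sum h_i-\sum\bar h_j$; $\star$, $A$ componentwise; $B^{\lambda,\lambda'}_{\lambda^0,\dots,\lambda^3}=\prod_{i\le l}B^{h_i,h'_i}_{h^0_i,\dots,h^3_i}\prod_{j\le r}\overline{B^{\bar h_j,\bar h'_j}_{\bar h^0_j,\dots,\bar h^3_j}}$. An $(l,r)$-framed algebra: finite-dimensional $\mathrm{IS}^{(l,r)}$-graded $S=\bigoplus S_\lambda$ over $\mathbb{C}$ with bilinear product, nonzero $1\in S_0$, $a\cdot_\lambda b$ the $S_\lambda$-component of $a\cdot b$, satisfying (FA1) $S_\lambda=0$ unless $s(\lambda)\in\mathbb{Z}$; (FA2) $S_0=\mathbb{C}1$, $1$ a two-sided unit; (FA3) $S_{\lambda^1}\cdot S_{\lambda^2}\subset\bigoplus_{\lambda\in\lambda^1\star\lambda^2}S_\lambda$; (FA4) $a_2\cdot_{\lambda^0}(a_1\cdot_{\lambda'}a_3)=\sum_{\lambda\in A(\lambda^0,\lambda^1,\lambda^2,\lambda^3)}B^{\lambda,\lambda'}_{\lambda^0,\lambda^1,\lambda^2,\lambda^3}a_1\cdot_{\lambda^0}(a_2\cdot_\lambda a_3)$ for $a_i\in S_{\lambda^i}$, $\lambda'\in A(\lambda^0,\lambda^2,\lambda^1,\lambda^3)$. Ideal: graded subspace $M$ with $S\cdot M\subset M$; simple: only ideals $0$ and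 $S$. Identify $\mathrm{IS}$ with $\{(d,c)\in\mathbb{Z}_2^2:dc=0\}$ via $0\leftrightarrow(0,0)$, $\frac12\leftrightarrow(0,1)$, $\frac1{16}\leftrightarrow(1,0)$, and componentwise $\mathrm{IS}^{(l,r)}$ with pairs $(d,c)\in(\mathbb{Z}_2^{l+r})^2$, $dc=0$; $S_{(d,c)}$ is the corresponding graded piece. *)

From HB Require Import structures.
From mathcomp Require Import all_boot all_order all_algebra all_field.
From mathcomp Require Import complex.
From mathcomp Require Import reals trigo.

Set Implicit Arguments.
Unset Strict Implicit.
Unset Printing Implicit Defensive.

Import GRing.Theory Num.Theory ComplexField.
Local Open Scope ring_scope.

Inductive IS := IS0 | IShalf | IS16.

Definition IS_to_ord (h : IS) : 'I_3 :=
  match h with IS0 => inord 0 | IShalf => inord 1 | IS16 => inord 2 end.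
Definition ord_to_IS (k : 'I_3) : IS :=
  match val k with 0 => IS0 | 1 => IShalf | _ => IS16 end.
Lemma IS_to_ordK : cancel IS_to_ord ord_to_IS.
Proof. by case; rewrite /ord_to_IS /= inordK. Qed.
HB.instance Definition _ := Finite.copy IS (can_type IS_to_ordK).

(* 16 * h, as a natural number *)
Definition wt16 (h : IS) : nat :=
  match h with IS0 => 0 | IShalf => 8 | IS16 => 1 end.

(* fusion rule: h \in h1 * h2 *)
Definition starb (h1 h2 h : IS) : bool :=
  match h1, h2 with
  | IS0, _ => h == h2
  | _, IS0 => h == h1
  | IShalf, IShalf => h == IS0
  | IShalf, IS16 | IS16, IShalf => h == IS16
  | IS16, IS16 => (h == IS0) || (h == IShalf)
  end.

Definition Ab (h0 h1 h2 h3 h : IS) : bool := starb h2 h3 h && starb h1 h h0.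

Definition zeta8 (R : realType) : R[i] := (cos (pi / 8) -i* sin (pi / 8))%C.

(* B^{h,h'}_{h0,h1,h2,h3}  (only meaningful for h \in A(h0,h1,h2,h3),
   h' \in A(h0,h2,h1,h3); the value 0 in the (vacuous) remaining
   1/16,1/16 case is an arbitrary filler) *)
Definition Bc (R : realType) (h h' h0 h1 h2 h3 : IS) : R[i] :=
  match h1, h2 with
  | IS0, _ => 1
  | _, IS0 => 1
  | IShalf, IShalf => -1
  | IShalf, IS16 | IS16, IShalf =>
      if (h0 == IShalf) || (h3 == IShalf) then 'i%C else - 'i%C
  | IS16, IS16 =>
      @zeta8 R *
      (if (h0 != IS16) && (h3 != IS16) then
         (if h0 == h3 then 1 else 'i%C)
       else if (h0 == IS16) && (h3 == IS16) then
         (if h == h' then (1 + 'i%C) / 2 else (1 - 'i%C) / 2)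
       else 0)
  end.

Definition grade (l r : nat) := ({ffun 'I_l -> IS} * {ffun 'I_r -> IS})%type.

Definition grade0 (l r : nat) : grade l r := ([ffun=> IS0], [ffun=> IS0]).

(* 16 * s(lambda) *)
Definition s16 (l r : nat) (lam : grade l r) : int :=
  (\sum_(i < l) (wt16 (lam.1 i))%:Z - \sum_(j < r) (wt16 (lam.2 j))%:Z)%R.

Definition starG (l r : nat) (lam1 lam2 lam : grade l r) : bool :=
  [forall i, starb (lam1.1 i) (lam2.1 i) (lam.1 i)] &&
  [forall j, starb (lam1.2 j) (lam2.2 j) (lam.2 j)].

Definition AG (l r : nat) (lam0 lam1 lam2 lam3 lam : grade l r) : bool :=
  [forall i, Ab (lam0.1 i) (lam1.1 i) (lam2.1 i) (lam3.1 i) (lam.1 i)] &&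
  [forall j, Ab (lam0.2 j) (lam1.2 j) (lam2.2 j) (lam3.2 j) (lam.2 j)].

Definition BG (R : realType) (l r : nat) (lam lam' lam0 lam1 lam2 lam3 : grade l r)
  : R[i] :=
  (\prod_(i < l) @Bc R (lam.1 i) (lam'.1 i) (lam0.1 i) (lam1.1 i) (lam2.1 i) (lam3.1 i)) *
  (\prod_(j < r) (@Bc R (lam.2 j) (lam'.2 j) (lam0.2 j) (lam1.2 j) (lam2.2 j) (lam3.2 j))^*).

Definition gcomp (R : realType) (l r : nat) (V : vectType R[i])
  (Sp : grade l r -> {vspace V}) (lam : grade l r) (v : V) : V :=
  sumv_pi (\sum_(mu : grade l r) Sp mu)%VS lam v.

Record framed_algebra (R : realType) (l r : nat) (V : vectType R[i]) := FramedAlgebra {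
  fa_sp : grade l r -> {vspace V};
  fa_one : V;
  fa_mul : V -> V -> V;
  fa_full : (\sum_(lam : grade l r) fa_sp lam)%VS = fullv;
  fa_direct : directv (\sum_(lam : grade l r) fa_sp lam);
  fa_linl : forall b, linear (fun a => fa_mul a b);
  fa_linr : forall a, linear (fa_mul a);
  fa_one_neq0 : fa_one != 0;
  fa_FA1 : forall lam, ~~ (16 %| s16 lam)%Z -> fa_sp lam = 0%VS;
  fa_FA2_span : fa_sp (grade0 l r) = <[fa_one]>%VS;
  fa_FA2_unitl : forall a, fa_mul fa_one a = a;
  fa_FA2_unitr : forall a, fa_mul a fa_one = a;
  fa_FA3 : forall lam1 lam2 a b, a \in fa_sp lam1 -> b \in fa_sp lam2 ->
    fa_mul a b \in (\sum_(lam | starG lam1 lam2 lam) fa_sp lam)%VS;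
  fa_FA4 : forall lam0 lam1 lam2 lam3 lam' a1 a2 a3,
    a1 \in fa_sp lam1 -> a2 \in fa_sp lam2 -> a3 \in fa_sp lam3 ->
    AG lam0 lam2 lam1 lam3 lam' ->
    gcomp fa_sp lam0 (fa_mul a2 (gcomp fa_sp lam' (fa_mul a1 a3))) =
    \sum_(lam | AG lam0 lam1 lam2 lam3 lam)
      @BG R l r lam lam' lam0 lam1 lam2 lam3 *:
        gcomp fa_sp lam0 (fa_mul a1 (gcomp fa_sp lam (fa_mul a2 a3)))
}.

Arguments framed_algebra : clear implicits.
Arguments fa_sp {R l r V}.
Arguments fa_one {R l r V}.
Arguments fa_mul {R l r V}.

Section FramedDefs.
Variables (R : realType) (l r : nat) (V : vectType R[i]) (S : framed_algebra R l r V).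

Definition fa_graded (M : {vspace V}) : Prop :=
  (\sum_(lam : grade l r) (M :&: fa_sp S lam))%VS = M.

Definition fa_ideal (M : {vspace V}) : Prop :=
  fa_graded M /\ (forall a m, m \in M -> fa_mul S a m \in M).

Definition fa_simple : Prop :=
  forall M, fa_ideal M -> M = 0%VS \/ M = fullv.

(* the d-part of a grade, via IS ~ {(d,c) : dc = 0}, 1/16 <-> (1,0) *)
Definition dpart (lam : grade l r) : {ffun 'I_l -> bool} * {ffun 'I_r -> bool} :=
  ([ffun i => lam.1 i == IS16], [ffun j => lam.2 j == IS16]).

Definition d0 : {ffun 'I_l -> bool} * {ffun 'I_r -> bool} :=
  ([ffun=> false], [ffun=> false]).

Definition A_S (d : {ffun 'I_l -> bool} * {ffun 'I_r -> bool}) : {vspace V} :=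
  (\sum_(lam | dpart lam == d) fa_sp S lam)%VS.

Definition in_D_S (d : {ffun 'I_l -> bool} * {ffun 'I_r -> bool}) : Prop :=
  A_S d != 0%VS.

End FramedDefs.

(* Let M be the span of the homogeneous components of all products a n with
   a in S and n in N; it contains N because 1 is in S.  Taking a3 = 1 in FA4
   shows that the product is skew-commutative up to scalars on homogeneous
   components, and combined with FA4 itself this moves any left factor b of
   a n next to a, so M is an ideal.  By simplicity M = 0, hence N = 0, or
   M = S.  In the latter case project onto A_S(d): the d-parts add under
   fusion, so the d-part d components of x n with n in N <= A_S(d) only
   involve the A_S(0)-part of x, which maps N into N; thus A_S(d) <= N. *)

From HB Require Import structures.
From mathcomp Require Import all_boot all_order all_algebra all_field.
From mathcomp Require Import complex.
From mathcomp Require Import reals trigo.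
Import GRing.Theory Num.Theory ComplexField.
Local Open Scope ring_scope.
Set Implicit Arguments.
Unset Strict Implicit.

Lemma forall_andb (T : finType) (a b : pred T) :
  [forall i, a i && b i] = [forall i, a i] && [forall i, b i].
Proof.
apply/forallP/andP => [ab | [/forallP a' /forallP b'] i]; last by rewrite a' b'.
by split; apply/forallP => i; case/andP: (ab i).
Qed.

Section LinearSpan.
Variables (K : fieldType) (V W : vectType K).

Lemma linear_span_sub (f : {linear V -> W}) (X : seq V) (U : {vspace W}) :
  {in X, forall x, f x \in U} -> {in <<X>>%VS, forall v, f v \in U}.
Proof.
move=> fXU v /(memv_img (linfun f)); rewrite lfunE /= limg_span; apply: subvP.
by apply/span_subvP => _ /mapP[x Xx ->]; rewrite lfunE fXU.
Qed.

End LinearSpan.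

Section DirectDecomposition.
Variables (K : fieldType) (V : vectType K) (I : finType) (U : I -> {vspace V}).
Hypotheses (U_full : (\sum_i U i)%VS = fullv) (U_direct : directv (\sum_i U i)).
Local Notation pi := (sumv_pi (\sum_i U i)%VS).

Lemma sumv_pi_sum_full v : \sum_i pi i v = v.
Proof. by apply: sumv_pi_sum; rewrite U_full memvf. Qed.

Lemma sumv_pi_component (w : I -> V) j :
  (forall i, w i \in U i) -> pi j (\sum_i w i) = w j.
Proof.
move=> wU; have /directv_sum_unique uniqU := U_direct.
have := uniqU (fun i => pi i (\sum_i w i)) w (fun i _ => memv_sum_pi _ i _)
  (fun i _ => wU i).
by rewrite sumv_pi_sum_full eqxx => /esym/forall_inP/(_ j isT)/eqP.
Qed.

Lemma sumv_pi_id i j v : v \in U i -> pi j v = if j == i then v else 0.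
Proof.
move=> vU; have vE : \sum_k (if k == i then v else 0) = v.
  by rewrite -big_mkcond big_pred1_eq.
by rewrite -{1}vE sumv_pi_component // => k; case: eqP => [->|_]; rewrite ?mem0v.
Qed.

Lemma sumv_pi_subsum_eq0 (P : pred I) j v :
  v \in (\sum_(i | P i) U i)%VS -> ~~ P j -> pi j v = 0.
Proof.
case/memv_sumP => w wU -> Pj; rewrite (big_mkcond P) /= sumv_pi_component ?(negPf Pj) //.
by move=> k; case: ifP => [/wU|_]; rewrite ?mem0v.
Qed.

Lemma sumv_pi_subsum (P : pred I) v :
  v \in (\sum_(i | P i) U i)%VS -> \sum_(i | P i) pi i v = v.
Proof.
move=> vUP; rewrite -[v in RHS]sumv_pi_sum_full [in RHS](bigID P) /=.
by rewrite [X in _ + X]big1 ?addr0 // => i; apply: sumv_pi_subsum_eq0.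
Qed.

Lemma sumv_pi_graded (W : {vspace V}) i w :
  (\sum_j (W :&: U j))%VS = W -> w \in W -> pi i w \in W.
Proof.
move=> Wgr; rewrite -{1}Wgr => /memv_sumP[u uWU ->].
rewrite sumv_pi_component => [|j]; first by have /memv_capP[] := uWU i isT.
by have /memv_capP[] := uWU j isT.
Qed.

End DirectDecomposition.

Lemma wt16_inj : injective wt16. Proof. by case; case. Qed.

Lemma starb_dpart h1 h2 h :
  starb h1 h2 h -> (h == IS16) = (h1 == IS16) (+) (h2 == IS16).
Proof. by rewrite /starb -!(inj_eq wt16_inj); case: h1; case: h2; case: h. Qed.

Section Grades.
Variables l r : nat.
Implicit Types lam al nu ka : grade l r.

Lemma AG_starG lam0 lam1 lam2 lam3 lam :
  AG lam0 lam1 lam2 lam3 lam = starG lam2 lam3 lam && starG lam1 lam lam0.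
Proof. by rewrite /AG /starG /Ab !forall_andb andbACA. Qed.

Lemma starG_grade0r lam : starG lam (grade0 l r) lam.
Proof.
by apply/andP; split; apply/forallP => i; rewrite ffunE; case: (_ i); rewrite /= eqxx.
Qed.

Lemma starG_dpart al nu ka :
  starG al nu ka -> dpart ka = dpart nu -> dpart al = d0 l r.
Proof.
case/andP => /forallP st1 /forallP st2 [/ffunP e1 /ffunP e2].
congr pair; apply/ffunP => i; rewrite !ffunE.
  by move: (e1 i); rewrite !ffunE (starb_dpart (st1 i)); case: (_ == _); case: (_ == _).
by move: (e2 i); rewrite !ffunE (starb_dpart (st2 i)); case: (_ == _); case: (_ == _).
Qed.

End Grades.

Section FramedAlgebra.
Variables (R : realType) (l r : nat) (V : vectType R[i]) (S : framed_algebra R l r V).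
Local Notation Sp := (fa_sp S).
Local Notation mul := (fa_mul S).
Local Notation pi := (sumv_pi (\sum_lam Sp lam)%VS).
Local Notation full := (fa_full S).
Local Notation direct := (fa_direct S).

HB.instance Definition _ a :=
  GRing.isLinear.Build R[i] V V *:%R (mul a) (fa_linr S a).

Definition fa_mulr b a := mul a b.
HB.instance Definition _ b :=
  GRing.isLinear.Build R[i] V V *:%R (fa_mulr b) (fa_linl S b).

Lemma fa_mulZl k a b : mul (k *: a) b = k *: mul a b.
Proof. exact: linearZZ (fa_mulr b) k a. Qed.

Lemma fa_mulZr k a b : mul a (k *: b) = k *: mul a b.
Proof. exact: linearZZ. Qed.

Lemma fa_mul_sumr (J : Type) (s : seq J) (P : pred J) (F : J -> V) a :
  mul a (\sum_(j <- s | P j) F j) = \sum_(j <- s | P j) mul a (F j).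
Proof. exact: linear_sum. Qed.

Lemma fa_mul_suml (J : Type) (s : seq J) (P : pred J) (F : J -> V) b :
  mul (\sum_(j <- s | P j) F j) b = \sum_(j <- s | P j) mul (F j) b.
Proof. exact: (linear_sum (fa_mulr b) s P F). Qed.

Lemma memv_fa_pi lam v : pi lam v \in Sp lam.
Proof. exact: memv_sum_pi. Qed.

Lemma fa_graded_pi N lam n : fa_graded S N -> n \in N -> pi lam n \in N.
Proof. exact: (sumv_pi_graded (W := N) full direct lam). Qed.

Lemma fa_one_mem : fa_one S \in Sp (grade0 l r).
Proof. by rewrite fa_FA2_span memv_line. Qed.

Lemma pi_mul_eq0 mu nu lam a b : a \in Sp mu -> b \in Sp nu ->
  ~~ starG mu nu lam -> pi lam (mul a b) = 0.
Proof.
by move=> aS bS; apply: (sumv_pi_subsum_eq0 full direct (P := starG mu nu)); exact: fa_FA3.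
Qed.

Lemma pi_mul_swap ga nu lam c n : c \in Sp ga -> n \in Sp nu ->
  pi lam (mul c n) \in <[pi lam (mul n c)]>%VS.
Proof.
move=> cS nS; have [st|nst] := boolP (starG ga nu lam); last first.
  by rewrite (pi_mul_eq0 cS nS nst) mem0v.
have AGc : AG lam ga nu (grade0 l r) nu by rewrite AG_starG st starG_grade0r.
have := fa_FA4 nS cS fa_one_mem AGc.
rewrite /gcomp !fa_FA2_unitr (sumv_pi_id full direct _ nS) eqxx => ->.
apply: rpred_sum => k _; apply: memvZ.
rewrite (sumv_pi_id full direct _ cS); case: eqP => _; first exact: memv_line.
by rewrite !linear0 mem0v.
Qed.

Section GeneratedIdeal.
Variable N : {vspace V}.

Definition ideal_gens : seq V :=
  [seq pi p.1 (mul (vbasis fullv)`_p.2.1 (vbasis N)`_p.2.2)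
    | p : grade l r * ('I_(\dim (fullv : {vspace V})) * 'I_(\dim N))].

Definition ideal_gen : {vspace V} := <<ideal_gens>>%VS.

Lemma ideal_gensP g :
  g \in ideal_gens -> exists lam x y, y \in N /\ g = pi lam (mul x y).
Proof.
case/mapP => p _ ->; exists p.1, (vbasis fullv)`_p.2.1, (vbasis N)`_p.2.2.
by split=> //; rewrite -tnth_nth; exact/vbasis_mem/mem_tnth.
Qed.

Lemma pi_mul_mem_ideal_gen lam x y : y \in N -> pi lam (mul x y) \in ideal_gen.
Proof.
move=> yN; rewrite (coord_vbasis (memvf x)) (coord_vbasis yN) fa_mul_suml.
rewrite linear_sum; apply: rpred_sum => i _; rewrite fa_mulZl linearZ; apply: memvZ.
rewrite !linear_sum; apply: rpred_sum => j _; rewrite !linearZ; apply: memvZ.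
by apply/memv_span/mapP; exists (lam, (i, j)); rewrite ?mem_enum.
Qed.

Lemma sub_ideal_gen : (N <= ideal_gen)%VS.
Proof.
apply/subvP => n nN; rewrite -(sumv_pi_sum_full full n); apply: rpred_sum => lam _.
by have := pi_mul_mem_ideal_gen lam (fa_one S) nN; rewrite fa_FA2_unitl.
Qed.

Hypothesis N_graded : fa_graded S N.

(* Swapping a and n, FA4 brings b next to a; swapping back puts n on the right. *)
Lemma pi_mul_pi_mul_hom_mem_ideal_gen be al nu ka lam0 b a n :
  b \in Sp be -> a \in Sp al -> n \in Sp nu -> n \in N ->
  pi lam0 (mul b (pi ka (mul a n))) \in ideal_gen.
Proof.
move=> bS aS nS nN.
suff: pi lam0 (mul b (pi ka (mul n a))) \in ideal_gen.
  by have /vlineP[s ->] := pi_mul_swap ka aS nS; rewrite fa_mulZr linearZ; apply: memvZ.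
have [AGc|nAG] := boolP (AG lam0 be nu al ka).
  have := fa_FA4 nS bS aS AGc; rewrite /gcomp => ->.
  apply: rpred_sum => k _; apply: memvZ.
  have /vlineP[s' ->] := pi_mul_swap lam0 nS (memv_fa_pi k (mul b a)).
  by apply: memvZ; apply: pi_mul_mem_ideal_gen.
move: nAG; rewrite AG_starG => /nandP[nst|nst].
  by rewrite (pi_mul_eq0 nS aS nst) !linear0 mem0v.
by rewrite (pi_mul_eq0 bS (memv_fa_pi _ _) nst) mem0v.
Qed.

Lemma pi_mul_pi_mul_mem_ideal_gen lam0 ka b x y : y \in N ->
  pi lam0 (mul b (pi ka (mul x y))) \in ideal_gen.
Proof.
move=> yN; rewrite -(sumv_pi_sum_full full b) fa_mul_suml linear_sum.
apply: rpred_sum => be _.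
rewrite -(sumv_pi_sum_full full x) fa_mul_suml !linear_sum.
apply: rpred_sum => al _.
rewrite -(sumv_pi_sum_full full y) !linear_sum.
apply: rpred_sum => nu _.
apply: pi_mul_pi_mul_hom_mem_ideal_gen (memv_fa_pi _ _) (memv_fa_pi _ _) (memv_fa_pi _ _) _.
exact: fa_graded_pi.
Qed.

Lemma ideal_gen_mul_closed a v : v \in ideal_gen -> mul a v \in ideal_gen.
Proof.
apply: (linear_span_sub (f := mul a)) => _ /ideal_gensP[ka [x [y [yN ->]]]].
rewrite -[X in X \in _](sumv_pi_sum_full full); apply: rpred_sum => lam0 _.
exact: pi_mul_pi_mul_mem_ideal_gen.
Qed.

Lemma ideal_gen_graded : fa_graded S ideal_gen.
Proof.
apply/eqP; rewrite eqEsubv; apply/andP; split.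
  by apply/subv_sumP => lam _; exact: capvSl.
apply/span_subvP => _ /ideal_gensP[lam [x [y [yN ->]]]].
apply: (subvP (sumv_sup lam _ (subvv _))) => //.
by rewrite memv_cap pi_mul_mem_ideal_gen ?memv_fa_pi.
Qed.

Lemma ideal_gen_ideal : fa_ideal S ideal_gen.
Proof. by split; [exact: ideal_gen_graded | exact: ideal_gen_mul_closed]. Qed.

End GeneratedIdeal.

Section ProjectionOntoA_S.
Variables (d : {ffun 'I_l -> bool} * {ffun 'I_r -> bool}) (N : {vspace V}).
Hypotheses (N_graded : fa_graded S N) (N_sub : (N <= A_S S d)%VS).
Hypothesis N_closed :
  forall a n, a \in A_S S (d0 l r) -> n \in N -> mul a n \in N.

Lemma pi_mul_pi_mem_dpart lam al nu x y : dpart lam = d -> y \in N ->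
  pi lam (mul (pi al x) (pi nu y)) \in N.
Proof.
move=> lam_d yN; have yA : y \in A_S S d := subvP N_sub y yN.
have [nu_d | nu_nd] := eqVneq (dpart nu) d; last first.
  by rewrite (sumv_pi_subsum_eq0 full direct yA nu_nd) !linear0 mem0v.
have [st | nst] := boolP (starG al nu lam); last first.
  by rewrite (pi_mul_eq0 (memv_fa_pi _ _) (memv_fa_pi _ _) nst) mem0v.
have al_d0 : dpart al = d0 l r by apply: starG_dpart st _; rewrite lam_d nu_d.
apply: fa_graded_pi N_graded _; apply: N_closed; last exact: fa_graded_pi.
by apply: (subvP (sumv_sup al _ (subvv _))); rewrite ?al_d0 ?memv_fa_pi.
Qed.

Lemma pi_mul_mem_dpart lam x y : dpart lam = d -> y \in N -> pi lam (mul x y) \in N.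
Proof.
move=> lam_d yN.
rewrite -(sumv_pi_sum_full full x) -(sumv_pi_sum_full full y) fa_mul_suml linear_sum.
apply: rpred_sum => al _; rewrite fa_mul_sumr linear_sum; apply: rpred_sum => nu _.
exact: pi_mul_pi_mem_dpart.
Qed.

Lemma pi_ideal_gen_mem lam v : dpart lam = d -> v \in ideal_gen N -> pi lam v \in N.
Proof.
move=> lam_d; apply: linear_span_sub => _ /ideal_gensP[ka [x [y [yN ->]]]].
rewrite /= (sumv_pi_id full direct _ (memv_fa_pi _ _)).
by case: eqP => [<- | _]; [exact: pi_mul_mem_dpart | exact: mem0v].
Qed.

End ProjectionOntoA_S.
End FramedAlgebra.

Unset Implicit Arguments.

Theorem mainTheorem9 (R : realType) (l r : nat) (V : vectType R[i])
    (S : framed_algebra R l r V) :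
  fa_simple S ->
  forall d : {ffun 'I_l -> bool} * {ffun 'I_r -> bool},
  in_D_S S d ->
  forall N : {vspace V},
    fa_graded S N ->
    (N <= A_S S d)%VS ->
    (forall a n, a \in A_S S (d0 l r) -> n \in N -> fa_mul S a n \in N) ->
    N = 0%VS \/ N = A_S S d.
Proof.
move=> S_simple d _ N N_graded N_sub N_closed.
have [M0 | M_full] := S_simple _ (ideal_gen_ideal N_graded).
  by left; apply/eqP; rewrite -subv0 -M0 sub_ideal_gen.
right; apply/eqP; rewrite eqEsubv N_sub /=; apply/subvP => v vA.
rewrite -(sumv_pi_subsum (fa_full S) (fa_direct S) vA).
apply: rpred_sum => lam /eqP lam_d.
by apply: (pi_ideal_gen_mem N_graded N_sub N_closed lam_d); rewrite M_full memvf.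
Qed.
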